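(* Let $p$ be a prime and $d\ge1$ with $q=p^d>9$ and $q\equiv7\pmod{12}$. Let $H_0$ be the subgroup of order $(q-1)/6$ of ${\rm GF}(q)^\times$ and $G=\{x\mapsto ax+b: a\in H_0,\ b\in{\rm GF}(q)\}$, a nonabelian subgroup of the affine group of ${\rm GF}(q)$ isomorphic to $({\rm GF}(q),+)\rtimes C_{(q-1)/6}$. Then $G$ contains a regular \[\left(\frac{q(q-1)}{6},\ \frac{3(q-3)}{2},\ \frac{q+3}{2},\ 9\right)\text{-PDS}.\]
   Context: A $(v,k,\lambda,\mu)$-PDS in a group $G$ of order $v$ is a $k$-subset $D$ such that every nonidentity element of $D$ is $xy^{-1}$ ($x,y\in D$) in exactly $\lambda$ ways and every nonidentity element of $G\setminus D$ in exactly $\mu$ ways; regular means $D=D^{(-1)}$ and $1\notin D$. *)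

From mathcomp Require Import all_boot all_order all_algebra all_fingroup all_field.
Set Implicit Arguments. Unset Strict Implicit. Unset Printing Implicit Defensive.
Import GRing.Theory.

Section PDS.
Variables (T : finType) (mul : T -> T -> T) (inv : T -> T) (one : T).

Definition pds_count (D : {set T}) (g : T) : nat :=
  #|[set xy in setX D D | mul xy.1 (inv xy.2) == g]|.

Definition is_PDS (G : {set T}) (v k lam mu : nat) (D : {set T}) : Prop :=
  [/\ D \subset G, #|G| = v, #|D| = k &
      forall g, g \in G -> g != one ->
        pds_count D g = (if g \in D then lam else mu)].

Definition is_regular_PDS (G : {set T}) (v k lam mu : nat) (D : {set T}) : Prop :=
  [/\ is_PDS G v k lam mu D, D = inv @: D & one \notin D].
End PDS.

(* The affine maps x |-> a x + b, a a unit of F, b in F, encoded as pairs (a, b);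
   multiplication is composition of maps: (f * g)(x) = f (g x). *)
Section Affine.
Variable F : finFieldType.
Definition aff_mul (f g : {unit F} * F) : {unit F} * F :=
  ((f.1 * g.1)%g, (val f.1 * g.2 + f.2)%R).
Definition aff_inv (f : {unit F} * F) : {unit F} * F :=
  ((f.1)^-1%g, (- (val (f.1)^-1%g * f.2))%R).
Definition aff_one : {unit F} * F := (1%g, 0%R).
Definition aff_group (H0 : {set {unit F}}) : {set {unit F} * F} :=
  [set f | f.1 \in H0].
End Affine.

From mathcomp Require Import all_boot all_order all_algebra all_fingroup all_field.
From mathcomp Require Import ring zify.
Set Implicit Arguments. Unset Strict Implicit. Unset Printing Implicit Defensive.

(* Write q = 6m + 1, so that |H0| = m and H0 has index 6 in GF(q)^x.  A
   counting argument gives c, not 0 or 1, such that the six differences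
   +-1, +-c, +-(c - 1) of B = {0, 1, c} lie in distinct cosets of H0.  Then the
   translates g(B), g in G, are the blocks of a Steiner triple system on GF(q)
   on which G acts regularly, each point lying on r = 3m blocks.  Two distinct
   blocks meeting in l points (l = 0 or 1) have exactly 9 + l (r - 1) - 6 l
   common neighbours in the block intersection graph, which is therefore
   strongly regular; transporting it to G along the regular action turns the
   neighbourhood D = { g <> 1 : g(B) meets B } of the identity into a regular
   PDS. *)

Lemma card_set_sum (T : finType) (A : {pred T}) (Q : pred T) :
  #|[set x in A | Q x]| = \sum_(x in A) Q x.
Proof.
rewrite -sum1_card (eq_bigl (fun x => (x \in A) && Q x)) => [|x]; last by rewrite inE.
by rewrite big_mkcondr; apply: eq_bigr => x _; case: (Q x).
Qed.

Lemma card_setI_sum (T : finType) (A B : {set T}) :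
  #|A :&: B| = \sum_(x in B) (x \in A).
Proof.
by rewrite -card_set_sum; apply: eq_card => x; rewrite !inE andbC.
Qed.

Lemma sum_eq_mem (T : finType) (B : {set T}) x0 :
  \sum_(x in B) (x0 == x) = (x0 \in B).
Proof.
rewrite -card_set_sum; case: (boolP (x0 \in B)) => Bx0 /=.
  by rewrite -(cards1 x0); apply: eq_card => x; rewrite !inE eq_sym andb_idl // => /eqP ->.
apply/eqP; rewrite cards_eq0; apply/eqP/setP=> x; rewrite !inE.
by apply/negbTE/andP=> -[Bx /eqP ex]; rewrite ex Bx in Bx0.
Qed.

Lemma card_offdiag (T : finType) (A : {set T}) :
  #|[set uv in setX A A | uv.1 != uv.2]| = #|A| * #|A| - #|A|.
Proof.
have diagA : #|setX A A :&: [set uv | uv.1 == uv.2]| = #|A|.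
  rewrite -[RHS](card_imset _ (fun u v (e : (u, u) = (v, v)) => congr1 fst e)).
  apply: eq_card => -[u v]; rewrite !inE /=; apply/idP/imsetP.
    by case/andP=> /andP[Au _] /eqP <-; exists u.
  by case=> w Aw [-> ->]; rewrite Aw eqxx.
have := cardsID [set uv : T * T | uv.1 == uv.2] (setX A A).
rewrite diagA cardsX => <-; rewrite addKn; apply: eq_card => uv.
by rewrite !inE andbC.
Qed.

Section LinearSpace.
Variables (T P : finType) (G : {set T}) (blk : T -> {set P}) (s r : nat).
Hypothesis blk_uniq : forall x x' y y', x != x' -> y \in G -> y' \in G ->
  x \in blk y -> x' \in blk y -> x \in blk y' -> x' \in blk y' -> y = y'.
Hypothesis blk_exists : forall x x', x != x' ->
  exists2 y, y \in G & (x \in blk y) && (x' \in blk y).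
Hypothesis card_blk : forall y, y \in G -> #|blk y| = s.
Hypothesis card_blk_through : forall x, #|[set y in G | x \in blk y]| = r.

Lemma card_blkI y y' : y \in G -> y' \in G -> y != y' ->
  #|blk y :&: blk y'| = ~~ [disjoint blk y & blk y'].
Proof.
move=> Gy Gy' ney; rewrite -setI_eq0 -cards_eq0.
suff : #|blk y :&: blk y'| <= 1 by case: #|_| => [|[]].
rewrite leqNgt; apply/negP=> /card_gt1P[x [x' [+ + nx]]].
rewrite !inE => /andP[xy xy'] /andP[x'y x'y'].
by case/eqP: ney; apply: (blk_uniq nx).
Qed.

Lemma card_blk_through2 x0 x1 :
  #|[set y in G | (x0 \in blk y) && (x1 \in blk y)]| = if x0 == x1 then r else 1.
Proof.
case: eqP => [<-|/eqP nx].
  by rewrite -(card_blk_through x0); apply: eq_card => y; rewrite !inE andbb.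
have [y Gy /andP[x0y x1y]] := blk_exists nx.
rewrite -(cards1 y); apply: eq_card => z; rewrite !inE.
apply/idP/eqP=> [/and3P[Gz x0z x1z]|->]; first exact: (blk_uniq nx).
by rewrite Gy x0y x1y.
Qed.

Lemma card_blk_meeting g0 : g0 \in G ->
  #|[set y in G | (y != g0) && ~~ [disjoint blk y & blk g0]]| = s * (r - 1).
Proof.
move=> Gg0; pose G' := [set y in G | y != g0].
have -> : #|[set y in G | (y != g0) && ~~ [disjoint blk y & blk g0]]| =
          \sum_(y in G') #|blk y :&: blk g0|.
  have -> : [set y in G | (y != g0) && ~~ [disjoint blk y & blk g0]] =
            [set y in G' | ~~ [disjoint blk y & blk g0]].
    by apply/setP=> y; rewrite !inE andbA.
  rewrite card_set_sum; apply: eq_bigr => y; rewrite inE => /andP[Gy ne].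
  by rewrite card_blkI.
under eq_bigr => y _ do rewrite card_setI_sum.
rewrite exchange_big /= -(card_blk Gg0) -sum_nat_const; apply: eq_bigr => x xg0.
rewrite -card_set_sum.
have -> : [set y in G' | x \in blk y] = [set y in G | x \in blk y] :\ g0.
  by apply/setP=> y; rewrite !inE andbCA andbA.
have := cardsD1 g0 [set y in G | x \in blk y].
by rewrite card_blk_through !inE Gg0 xg0 add1n => ->; rewrite subn1.
Qed.

Lemma card_blk_through2_other g0 g1 x0 x1 : g0 \in G -> g1 \in G -> g0 != g1 ->
  x0 \in blk g0 -> x1 \in blk g1 ->
  #|[set y in G | [&& y != g0, y != g1, x0 \in blk y & x1 \in blk y]]|
    + ((x1 \in blk g0) + (x0 \in blk g1)) = 1 + (x0 == x1) * (r - 1).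
Proof.
move=> Gg0 Gg1 ne01 x0g0 x1g1.
set Tx := [set y in G | (x0 \in blk y) && (x1 \in blk y)].
have -> : 1 + (x0 == x1) * (r - 1) = #|Tx|.
  rewrite card_blk_through2; case: eqP => _ //; rewrite mul1n addnC subnK //.
  by rewrite -(card_blk_through x0); apply/card_gt0P; exists g0; rewrite !inE Gg0.
have -> : [set y in G | [&& y != g0, y != g1, x0 \in blk y & x1 \in blk y]] = Tx :\ g0 :\ g1.
  by apply/setP=> y; rewrite !inE; case: (y \in G); case: (y != g0); case: (y != g1).
have Tg0 : (g0 \in Tx) = (x1 \in blk g0) by rewrite !inE Gg0 x0g0.
have Tg1 : (g1 \in Tx :\ g0) = (x0 \in blk g1) by rewrite !inE eq_sym ne01 Gg1 x1g1 andbT.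
by rewrite (cardsD1 g0 Tx) (cardsD1 g1 (Tx :\ g0)) Tg0 Tg1 addnC addnA.
Qed.

(* Double count the triples (y, x0, x1) with x0 in blk y :&: blk g0 and
   x1 in blk y :&: blk g1. *)
Lemma card_blk_meeting2 g0 g1 : g0 \in G -> g1 \in G -> g0 != g1 ->
  #|[set y in G | [&& y != g0, y != g1, ~~ [disjoint blk y & blk g0]
                   & ~~ [disjoint blk y & blk g1]]]| + 2 * s * #|blk g0 :&: blk g1|
  = s * s + #|blk g0 :&: blk g1| * (r - 1).
Proof.
move=> Gg0 Gg1 ne01; set l := #|_ :&: _|; set B0 := blk g0; set B1 := blk g1.
have -> : #|[set y in G | [&& y != g0, y != g1, ~~ [disjoint blk y & B0]
                          & ~~ [disjoint blk y & B1]]]| =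
    \sum_(x0 in B0) \sum_(x1 in B1)
      #|[set y in G | [&& y != g0, y != g1, x0 \in blk y & x1 \in blk y]]|.
  pose G' := [set y in G | (y != g0) && (y != g1)].
  have -> : [set y in G | [&& y != g0, y != g1, ~~ [disjoint blk y & B0]
                            & ~~ [disjoint blk y & B1]]] =
            [set y in G' | ~~ [disjoint blk y & B0] && ~~ [disjoint blk y & B1]].
    by apply/setP=> y; rewrite !inE -!andbA.
  rewrite card_set_sum (eq_bigr (fun y => \sum_(x0 in B0) \sum_(x1 in B1)
                         ((x0 \in blk y) && (x1 \in blk y)))) => [|y]; last first.
    rewrite inE => /and3P[Gy n0 n1].
    rewrite -mulnb -card_blkI // -card_blkI // !card_setI_sum big_distrl /=.
    by apply: eq_bigr => x0 _; rewrite big_distrr; apply: eq_bigr => x1 _; exact: mulnb.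
  rewrite exchange_big; apply: eq_bigr => x0 _.
  rewrite exchange_big; apply: eq_bigr => x1 _; rewrite -card_set_sum.
  by apply: eq_card => y; rewrite !inE -!andbA.
have -> : 2 * s * l = \sum_(x0 in B0) \sum_(x1 in B1) ((x1 \in B0) + (x0 \in B1)).
  rewrite (eq_bigr (fun x0 => l + s * (x0 \in B1))) => [|x0 _]; last first.
    by rewrite big_split /= -card_setI_sum sum_nat_const card_blk.
  rewrite big_split /= sum_nat_const card_blk // -big_distrr /= -card_setI_sum setIC -/l.
  by rewrite -mulnA mul2n -addnn.
have -> : s * s + l * (r - 1) = \sum_(x0 in B0) \sum_(x1 in B1) (1 + (x0 == x1) * (r - 1)).
  rewrite (eq_bigr (fun x0 => s + (x0 \in B1) * (r - 1))) => [|x0 _]; last first.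
    by rewrite big_split /= sum_nat_const card_blk // -big_distrl /= sum_eq_mem muln1.
  by rewrite big_split /= sum_nat_const card_blk // -big_distrl /= -card_setI_sum setIC.
rewrite -big_split; apply: eq_bigr => x0 x0B0.
by rewrite -big_split; apply: eq_bigr => x1 x1B1; exact: card_blk_through2_other.
Qed.

End LinearSpace.

Import GRing.Theory FinRing.Theory.
Local Open Scope ring_scope.

Section AffineGroup.
Variable F : finFieldType.
Local Notation aff := ({unit F} * F)%type.
Local Notation one := (aff_one F).

Definition aff_act (f : aff) (x : F) : F := val f.1 * x + f.2.

Lemma unit_neq0 (u : {unit F}) : val u != 0.
Proof. by rewrite -unitfE; apply: valP. Qed.

Lemma aff_act_mul f g x : aff_act (aff_mul f g) x = aff_act f (aff_act g x).
Proof. rewrite /aff_act /=; ring. Qed.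

Lemma aff_act1 x : aff_act one x = x.
Proof. by rewrite /aff_act /= mul1r addr0. Qed.

Lemma aff_actK f : cancel (aff_act f) (aff_act (aff_inv f)).
Proof.
move=> x; rewrite /aff_act /= mulrDr mulrA mulVf ?unit_neq0 //.
by rewrite mul1r addrK.
Qed.

Lemma aff_actVK f : cancel (aff_act (aff_inv f)) (aff_act f).
Proof.
move=> x; rewrite /aff_act /= mulrDr mulrA mulfV ?unit_neq0 //.
by rewrite mul1r mulrN mulrA mulfV ?unit_neq0 // mul1r subrK.
Qed.

Lemma aff_act_inj f : injective (aff_act f).
Proof. exact: can_inj (aff_actK f). Qed.

Lemma aff_act_ext f g : aff_act f =1 aff_act g -> f = g.
Proof.
case: f g => [a b] [a' b'] fg.
have eb : b = b' by have := fg 0; rewrite /aff_act /= !mulr0 !add0r.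
have /val_inj ea : val a = val a' by have := fg 1; rewrite /aff_act /= !mulr1 eb => /addIr.
by rewrite ea eb.
Qed.

Lemma aff_mulKV (f g : aff) : aff_mul (aff_mul f (aff_inv g)) g = f.
Proof. by apply: aff_act_ext => x; rewrite !aff_act_mul aff_actK. Qed.

Lemma aff_mulVK (f g : aff) : aff_mul (aff_mul f g) (aff_inv g) = f.
Proof. by apply: aff_act_ext => x; rewrite !aff_act_mul aff_actVK. Qed.

Lemma aff_mulKl (f g : aff) : aff_mul (aff_inv f) (aff_mul f g) = g.
Proof. by apply: aff_act_ext => x; rewrite !aff_act_mul aff_actK. Qed.

Lemma aff_mulV (f : aff) : aff_mul f (aff_inv f) = one.
Proof. by apply: aff_act_ext => x; rewrite aff_act_mul aff_actVK aff_act1. Qed.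

Lemma aff_mulVl (f : aff) : aff_mul (aff_inv f) f = one.
Proof. by apply: aff_act_ext => x; rewrite aff_act_mul aff_actK aff_act1. Qed.

Lemma aff_mul1 (f : aff) : aff_mul f one = f.
Proof. by apply: aff_act_ext => x; rewrite aff_act_mul aff_act1. Qed.

Lemma aff_invK : involutive (@aff_inv F).
Proof.
move=> f; apply: aff_act_ext => x; apply: (@aff_act_inj (aff_inv f)).
by rewrite aff_actVK aff_actK.
Qed.

Lemma aff_inv1 : aff_inv one = one.
Proof. by rewrite -[LHS]aff_mul1 aff_mulVl. Qed.

Lemma aff_inv_eq1 (f : aff) : (aff_inv f == one) = (f == one).
Proof. by rewrite -{1}aff_inv1 (inj_eq (can_inj aff_invK)). Qed.

Variable H0 : {group {unit F}}.
Local Notation G := (aff_group H0).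

Lemma aff_groupV f : f \in G -> aff_inv f \in G.
Proof. by rewrite !inE groupV. Qed.

Lemma aff_group1 : one \in G.
Proof. by rewrite inE group1. Qed.

Lemma card_aff_group : #|G| = (#|H0| * #|F|)%N.
Proof.
rewrite -cardsT -cardsX; apply: eq_card => -[a b].
by rewrite !inE andbT.
Qed.

Lemma pds_count_aff (D : {set aff}) h :
  pds_count (@aff_mul F) (@aff_inv F) D h = #|[set y in D | aff_mul h y \in D]|.
Proof.
rewrite /pds_count -(card_imset _ (fun y1 y2 (e : (aff_mul h y1, y1) = (aff_mul h y2, y2)) =>
                                     congr1 snd e)).
apply: eq_card => -[x y]; rewrite !inE /=; apply/idP/imsetP.
  case/andP=> /andP[xD yD] /eqP hxy; exists y; last by rewrite -hxy aff_mulKV.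
  by rewrite inE yD -hxy aff_mulKV.
by case=> z; rewrite inE => /andP[zD hzD] [-> ->]; rewrite hzD zD aff_mulVK eqxx.
Qed.

End AffineGroup.

(* For B in GF(q) and n | q - 1, (v - u) ^+ n determines the coset of v - u
   modulo the subgroup of order n of GF(q)^x: the differences of distinct
   elements of B lie in pairwise distinct cosets. *)
Definition distinct_diffs (F : fieldType) (n : nat) (B : {pred F}) : Prop :=
  forall u v u' v', u \in B -> v \in B -> u' \in B -> v' \in B ->
    u != v -> u' != v' -> (v - u) ^+ n = (v' - u') ^+ n -> u = u' /\ v = v'.

Section BaseBlock.
Variables (F : finFieldType) (H0 : {group {unit F}}) (B : {set F}).
Local Notation aff := ({unit F} * F)%type.
Local Notation one := (aff_one F).
Local Notation G := (aff_group H0).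
Local Notation m := #|H0|.
Local Notation s := #|B|.

Hypothesis card_F : #|F| = (m * (s * s - s)).+1.
Hypothesis B_diffs : distinct_diffs m B.

Definition blk (g : aff) : {set F} := aff_act g @: B.

Lemma card_blk g : #|blk g| = s.
Proof. exact/card_imset/aff_act_inj. Qed.

Lemma expg_card_val (a : {unit F}) : a \in H0 -> val a ^+ m = 1.
Proof. by move=> H0a; rewrite -val_unitX cyclic.expg_cardG. Qed.

Lemma aff_act_pair_inj g g' u v u' v' : g \in G -> g' \in G ->
  u \in B -> v \in B -> u' \in B -> v' \in B -> u != v -> u' != v' ->
  aff_act g u = aff_act g' u' -> aff_act g v = aff_act g' v' ->
  [/\ g = g', u = u' & v = v'].
Proof.
rewrite !inE => Gg Gg' Bu Bv Bu' Bv' nuv nuv' eu ev.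
have eqdiff : val g.1 * (v - u) = val g'.1 * (v' - u').
  transitivity (aff_act g v - aff_act g u); first by rewrite /aff_act; ring.
  by rewrite ev eu /aff_act; ring.
have [eu' ev'] : u = u' /\ v = v'.
  apply: B_diffs => //; move/(congr1 (fun z => z ^+ m)): eqdiff.
  by rewrite !exprMn !expg_card_val ?mul1r.
subst u' v'.
have ea : val g.1 = val g'.1 by apply: (mulIf _ eqdiff); rewrite subr_eq0 eq_sym.
have eb : g.2 = g'.2 by move: eu; rewrite /aff_act ea => /addrI.
by split=> //; apply: aff_act_ext => x; rewrite /aff_act ea eb.
Qed.

Lemma blk_uniq x x' y y' : x != x' -> y \in G -> y' \in G ->
  x \in blk y -> x' \in blk y -> x \in blk y' -> x' \in blk y' -> y = y'.
Proof.
move=> nx Gy Gy' /imsetP[u Bu ex] /imsetP[v Bv ex'] /imsetP[u' Bu' ex2] /imsetP[v' Bv' ex2'].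
have nuv : u != v by apply: contraNneq nx; rewrite ex ex' => ->.
have nuv' : u' != v' by apply: contraNneq nx; rewrite ex2 ex2' => ->.
have eu : aff_act y u = aff_act y' u' by rewrite -ex -ex2.
have ev : aff_act y v = aff_act y' v' by rewrite -ex' -ex2'.
by case: (aff_act_pair_inj Gy Gy' Bu Bv Bu' Bv' nuv nuv' eu ev).
Qed.

(* [place] injects G x {distinct pairs of B} into the distinct pairs of F,
   which have the same number of elements by card_F. *)
Lemma blk_exists x x' : x != x' -> exists2 y, y \in G & (x \in blk y) && (x' \in blk y).
Proof.
move=> nx; pose Dl := [set uv in setX B B | uv.1 != uv.2].
pose place (gp : aff * (F * F)) := (aff_act gp.1 gp.2.1, aff_act gp.1 gp.2.2).
have place_inj : {in setX G Dl &, injective place}.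
  move=> [g [u v]] [g' [u' v']] /setXP[Gg /setIdP[/setXP[Bu Bv] nuv]].
  move=> /setXP[Gg' /setIdP[/setXP[Bu' Bv'] nuv']] [eu ev].
  by case: (aff_act_pair_inj Gg Gg' Bu Bv Bu' Bv' nuv nuv' eu ev) => -> -> ->.
have place_onto : place @: setX G Dl = [set xy in setX setT setT | xy.1 != xy.2].
  apply/eqP; rewrite eqEcard card_in_imset // cardsX card_offdiag card_aff_group.
  rewrite card_offdiag !cardsT card_F; apply/andP; split; last first.
    by set N := (m * _)%N; rewrite mulnAC -/N mulnS addKn mulnC.
  apply/subsetP=> _ /imsetP[[g [u v]] /setXP[_ /setIdP[_ nuv]] ->]; rewrite !inE /=.
  by apply: contra nuv => /eqP/aff_act_inj ->.
have : (x, x') \in place @: setX G Dl by rewrite place_onto !inE.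
case/imsetP=> -[g [u v]] /setXP[Gg /setIdP[/setXP[Bu Bv] _]] [-> ->].
by exists g; rewrite // !imset_f.
Qed.

Lemma card_blk_through x : #|[set y in G | x \in blk y]| = (s * m)%N.
Proof.
pose anchor (au : {unit F} * F) : aff := (au.1, x - val au.1 * au.2).
have -> : [set y in G | x \in blk y] = anchor @: setX H0 B.
  apply/setP=> -[a b]; rewrite !inE /=; apply/andP/imsetP=> [[H0a /imsetP[u Bu ex]]|].
    by exists (a, u); rewrite ?inE ?H0a //= /anchor ex /aff_act /=; congr pair; ring.
  case=> -[a' u]; rewrite !inE /= => /andP[H0a' Bu] [-> ->]; split=> //.
  by apply/imsetP; exists u => //; rewrite /aff_act /=; ring.
rewrite card_in_imset ?cardsX 1?mulnC // => -[a u] [a' u'] _ _ [ea].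
by rewrite /= ea => /addrI/oppr_inj/(mulfI (unit_neq0 a')) ->.
Qed.

Lemma blk_mul f y : blk (aff_mul f y) = aff_act f @: blk y.
Proof. by rewrite /blk -imset_comp; apply: eq_imset => z; rewrite /= aff_act_mul. Qed.

Lemma disjoint_blk_mul f y y' :
  [disjoint blk (aff_mul f y) & blk (aff_mul f y')] = [disjoint blk y & blk y'].
Proof.
rewrite -!setI_eq0 !blk_mul -imsetI ?imset_eq0 // => u v _ _; exact: aff_act_inj.
Qed.

Definition blk_pds : {set aff} :=
  [set y in G | (y != one) && ~~ [disjoint blk y & blk one]].

Lemma blk_pds_inv y : (aff_inv y \in blk_pds) = (y \in blk_pds).
Proof.
suff sub z : z \in blk_pds -> aff_inv z \in blk_pds.
  by apply/idP/idP=> [/sub|/sub//]; rewrite aff_invK.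
rewrite !inE aff_inv_eq1 => /and3P[H0z nz1 meet]; rewrite groupV nz1 /=.
rewrite -[blk one](congr1 blk (aff_mulVl z)) -{1}[aff_inv z]aff_mul1.
by rewrite disjoint_blk_mul disjoint_sym H0z.
Qed.

Lemma blk_pds_translate h y : h \in G ->
  (y \in blk_pds) && (aff_mul h y \in blk_pds) =
  (y \in G) && [&& y != one, y != aff_inv h, ~~ [disjoint blk y & blk one]
                 & ~~ [disjoint blk y & blk (aff_inv h)]].
Proof.
rewrite !inE => H0h; case: (boolP (y.1 \in H0)) => //= H0y.
rewrite groupM //.
have -> : (aff_mul h y != one) = (y != aff_inv h).
  congr negb; apply/eqP/eqP=> [hy1|->]; last exact: aff_mulV.
  by rewrite -(aff_mulKl h y) hy1 aff_mul1.
rewrite -[blk one](congr1 blk (aff_mulV h)) disjoint_blk_mul.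
by case: (y != one); case: (y != aff_inv h); rewrite /= ?andbT ?andbF.
Qed.

Lemma pds_count_blk_pds h : h \in G -> h != one ->
  (pds_count (@aff_mul F) (@aff_inv F) blk_pds h + 2 * s * (h \in blk_pds) =
   s * s + (h \in blk_pds) * (s * m - 1))%N.
Proof.
move=> Gh nh1; have Gh' := aff_groupV Gh.
have n1h : one != aff_inv h by rewrite eq_sym aff_inv_eq1.
rewrite pds_count_aff.
have -> : [set y in blk_pds | aff_mul h y \in blk_pds] =
          [set y in G | [&& y != one, y != aff_inv h, ~~ [disjoint blk y & blk one]
                         & ~~ [disjoint blk y & blk (aff_inv h)]]].
  by apply/setP=> y; rewrite [LHS]inE blk_pds_translate // inE.
have -> : (h \in blk_pds) = #|blk one :&: blk (aff_inv h)| :> nat.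
  rewrite (card_blkI blk_uniq) ?aff_group1 // -(disjoint_blk_mul h) aff_mul1 aff_mulV.
  by rewrite inE Gh nh1 disjoint_sym.
exact: (card_blk_meeting2 blk_uniq blk_exists (fun y _ => card_blk y) card_blk_through
          (aff_group1 _) Gh' n1h).
Qed.

Lemma blk_pds_regular :
  is_regular_PDS (@aff_mul F) (@aff_inv F) one G (m * #|F|)
    (s * (s * m - 1)) (s * s + (s * m - 1) - 2 * s) (s * s) blk_pds.
Proof.
split; first split.
- by apply/subsetP=> y; rewrite inE => /andP[].
- exact: card_aff_group.
- exact: (card_blk_meeting blk_uniq (fun y _ => card_blk y) card_blk_through (aff_group1 _)).
- move=> h Gh nh1; have := pds_count_blk_pds Gh nh1.
  case: (h \in blk_pds); rewrite /= ?muln1 ?mul1n ?muln0 ?addn0 //.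
  by move=> <-; rewrite addnK.
- apply/setP=> y; apply/idP/imsetP=> [Dy|[z Dz ->]]; last by rewrite blk_pds_inv.
  by exists (aff_inv y); rewrite ?blk_pds_inv ?aff_invK.
- by rewrite inE eqxx andbF.
Qed.

End BaseBlock.

Lemma exprN_even (R : pzRingType) (y : R) n : (- y) ^+ (2 * n) = y ^+ (2 * n).
Proof. by rewrite !exprM sqrrN. Qed.

Lemma exprN_odd_neq (R : idomainType) (y : R) n : odd n -> 2%:R != 0 :> R ->
  y != 0 -> (- y) ^+ n != y ^+ n.
Proof.
move=> n_odd two_nz y_nz; rewrite exprNn -signr_odd n_odd expr1 mulN1r eq_sym.
by rewrite -addr_eq0 -mulr2n -mulr_natr mulf_eq0 (negbTE two_nz) expf_eq0 (negbTE y_nz) andbF.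
Qed.

Lemma card_unity_roots (R : finFieldType) n : (0 < n)%N ->
  (#|[set x : R | x ^+ n == 1%R]| <= n)%N.
Proof.
move=> n_gt0; rewrite cardE; apply: max_unity_roots => //; last exact: enum_uniq.
by apply/allP=> x; rewrite mem_enum inE unity_rootE.
Qed.

Section Triple.
Variables (F : finFieldType) (m : nat).
Local Notation k x := (x ^+ (2 * m)).

Lemma card_triple (c : F) : c != 0 -> c != 1 -> #|[set 0; 1; c]| = 3%N.
Proof.
move=> c0 c1; rewrite -setUA !cardsU1 cards1 !inE eq_sym oner_eq0 (eq_sym 0) (negbTE c0).
by rewrite (eq_sym 1) (negbTE c1).
Qed.

(* At most 2m - 1 values x fail each of the last three conditions: x and x - 1
   range over the 2m-th roots of unity other than 1 and -1 respectively, and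
   x |-> x^-1 maps the failures of the last one to failures of the second. *)
Lemma exists_triple : #|F| = (6 * m).+1 ->
  exists c : F, [/\ c != 0, c != 1, k c != 1, k (c - 1) != 1 & k c != k (c - 1)].
Proof.
move=> card_F; have m_gt0 : (0 < m)%N.
  by have := finNzRing_gt1 F; rewrite card_F; case: m.
case: (pickP [pred c : F | [&& c != 0, c != 1, k c != 1, k (c - 1) != 1
                              & k c != k (c - 1)]]) => [c /and5P[] | no_triple].
  by exists c.
exfalso; pose Q := [set x : F | k x == 1].
have card_Q : (#|Q| <= 2 * m)%N by rewrite card_unity_roots ?muln_gt0.
pose P0 := [set x : F | [&& x != 0, x != 1 & k x == 1]].
pose P1 := [set x : F | [&& x != 0, x != 1 & k (x - 1) == 1]].
pose P2 := [set x : F | [&& x != 0, x != 1 & k x == k (x - 1)]].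
have card_P0 : (#|P0| < #|Q|)%N.
  apply: proper_card; apply/properP; split; last first.
    by exists 1; rewrite !inE ?expr1n ?eqxx ?andbF.
  by apply/subsetP=> x; rewrite !inE => /and3P[].
have card_P1 : (#|P1| < #|Q|)%N.
  rewrite -(card_imset _ (addIr (-1))); apply: proper_card; apply/properP; split.
    apply/subsetP=> y /imsetP[x]; rewrite !inE => /and3P[_ _ kx1] ->; exact: kx1.
  exists (-1); first by rewrite inE exprN_even expr1n.
  apply/imsetP=> -[x]; rewrite !inE => /and3P[x0 _ _].
  by move/eqP; rewrite eq_sym subr_eq addNr (negbTE x0).
have card_P2 : (#|P2| <= #|P1|)%N.
  rewrite -(card_imset _ (@invr_inj F)); apply/subset_leq_card/subsetP=> y /imsetP[x].
  rewrite !inE => /and3P[x0 x1 kx] ->; rewrite invr_eq0 invr_eq1 x0 x1 /=.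
  have -> : x^-1 - 1 = - (x - 1) * x^-1 by field.
  by rewrite exprMn exprN_even -(eqP kx) exprVn mulfV ?expf_neq0.
have cover : ~: [set 0; 1] \subset P0 :|: P1 :|: P2.
  apply/subsetP=> x; rewrite !inE negb_or => /andP[x0 x1]; rewrite x0 x1 /=.
  by move: (no_triple x); rewrite /= x0 x1 /=; do 3!case: (_ == _).
have card_cover : (#|~: [set 0%R; 1%R : F]| + 2)%N = #|F|.
  by rewrite -(cardsC [set (0 : F); 1]) cards2 eq_sym oner_eq0 addnC.
have card_union : (#|~: [set 0%R; 1%R : F]| <= #|P0| + #|P1| + #|P2|)%N.
  apply: leq_trans (subset_leq_card cover) _.
  by apply: leq_trans (leq_card_setU _ _) _; rewrite leq_add2r leq_card_setU.
lia.
Qed.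

(* The differences of distinct elements of {0, 1, c} are +-1, +-c, +-(c - 1):
   opposite ones have distinct m-th powers as m is odd, and the others already
   have distinct 2m-th powers. *)
Lemma triple_distinct_diffs (c : F) : odd m -> 2%:R != 0 :> F ->
  c != 0 -> c != 1 -> k c != 1 -> k (c - 1) != 1 -> k c != k (c - 1) ->
  distinct_diffs m [set 0; 1; c].
Proof.
move=> m_odd two_nz c0 c1 kc kc1 kcc1.
have sign (y : F) : y != 0 -> (- y) ^+ m = y ^+ m \/ y ^+ m = (- y) ^+ m -> False.
  by move=> y0 [|/esym] /eqP; apply/negP/exprN_odd_neq.
have c1' : c - 1 != 0 by rewrite subr_eq0.
have onec : 1 - c = - (c - 1) by rewrite opprB.
move=> u v u' v'; rewrite !inE -!orbA.
move=> /or3P[]/eqP-> /or3P[]/eqP-> /or3P[]/eqP-> /or3P[]/eqP-> // nuv nuv' E.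
all: try by rewrite eqxx in nuv nuv'.
all: exfalso; rewrite ?subr0 ?sub0r ?onec in E.
all: try by apply: (sign _ _ (or_introl E)); rewrite ?oner_eq0.
all: try by apply: (sign _ _ (or_intror E)); rewrite ?oner_eq0.
all: move/(congr1 (fun z => z ^+ 2)): E; rewrite -!exprM [(m * 2)%N]mulnC => /eqP.
all: rewrite ?exprN_even ?expr1n ?(eq_sym 1) ?(eq_sym (k (c - 1)) (k c)).
all: by rewrite ?(negbTE kc) ?(negbTE kc1) ?(negbTE kcc1).
Qed.

End Triple.

Local Close Scope ring_scope.

Lemma finField_two_neq0 (F : finFieldType) p d :
  prime p -> #|F| = p ^ d -> odd p -> (2%:R != 0 :> F)%R.
Proof.
move=> p_pr card_F p_odd; rewrite -(dvdn_pcharf (card_finPcharP card_F p_pr)).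
apply: contraL p_odd => /(dvdn_leq (isT : 0 < 2)) p_le2.
by have := prime_gt1 p_pr; case: p {p_pr card_F} p_le2 => [|[|[]]].
Qed.

Theorem mainTheorem20 (F : finFieldType) (p d : nat) (H0 : {group {unit F}}) :
  prime p -> 0 < d -> #|F| = p ^ d -> 9 < p ^ d -> p ^ d %% 12 = 7 ->
  #|H0| = (p ^ d - 1) %/ 6 ->
  exists D : {set {unit F} * F},
    is_regular_PDS (@aff_mul F) (@aff_inv F) (aff_one F) (aff_group H0)
      (p ^ d * (p ^ d - 1) %/ 6) (3 * (p ^ d - 3) %/ 2) ((p ^ d + 3) %/ 2) 9 D.
Proof.
move=> p_pr d_gt0 card_F _ q_mod12 card_H0; set m := #|H0| in card_H0 *.
have card_F6 : #|F| = (6 * m).+1 by rewrite card_F card_H0; lia.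
have m_odd : odd m.
  have : m %% 2 = 1 by rewrite card_H0; lia.
  by rewrite modn2; case: (odd m).
have p_odd : odd p.
  have : p ^ d %% 2 = 1 by lia.
  by rewrite modn2 oddX eqn0Ngt d_gt0; case: (odd p).
have [c [c0 c1 kc kc1 kcc1]] := exists_triple card_F6.
have card_B := card_triple c0 c1.
have card_FB : #|F| = (m * (#|[set 0%R; 1%R; c]| * #|[set 0%R; 1%R; c]|
                             - #|[set 0%R; 1%R; c]|)).+1.
  by rewrite card_B card_F6 mulnC.
exists (blk_pds H0 [set 0%R; 1%R; c]).
have := blk_pds_regular card_FB
          (triple_distinct_diffs m_odd (finField_two_neq0 p_pr card_F p_odd) c0 c1 kc kc1 kcc1).
have -> : p ^ d * (p ^ d - 1) %/ 6 = m * #|F|.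
  by rewrite -card_F card_F6 subn1 /= mulnCA mulKn // mulnC.
rewrite card_B -card_F card_F6.
have -> : 3 * ((6 * m).+1 - 3) %/ 2 = 3 * (3 * m - 1) by lia.
by have -> : ((6 * m).+1 + 3) %/ 2 = 3 * 3 + (3 * m - 1) - 2 * 3 by lia.
Qed.
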